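(* Let $(X,f)$ be a dynamical system. The following are equivalent: (1) $(X,f)$ is multi-transitive; (2) $(X,f)$ is $\mathcal{F}[\infty]$-transitive; (3) $(X,f)$ is $\nabla(\mathcal{F}[\infty])$-point transitive.
   Context: A dynamical system is a pair $(X,f)$ with $X$ a compact metric space and $f:X\to X$ continuous. $\mathbb{N}=\{1,2,\dots\}$, $\mathbb{Z}_+=\{0,1,2,\dots\}$. $N(U,V)=\{n\in\mathbb{N}: U\cap f^{-n}(V)\neq\emptyset\}$, $N(x,U)=\{n\in\mathbb{N}: f^n(x)\in U\}$. $(X,f)$ is transitive if $N(U,V)\neq\emptyset$ for all non-empty open $U,V$. For a family $\mathcal{F}$ of subsets of $\mathbb{N}$: $(X,f)$ is $\mathcal{F}$-transitive if $N(U,V)\in\mathcal{F}$ for all non-empty open $U,V$; $x$ is an $\mathcal{F}$-transitive point if $N(x,U)\in\mathcal{F}$ for every non-empty open $U$, and $(X,f)$ is $\mathcal{F}$-point transitive if such a point exists. For $F\subset\mathbb{N}$, $F-F=\{a-b:a,b\in F,\ a>b\}$ and $\nabla(\mathcal{F})=\{F\subset\mathbb{N}: F-F\in\mathcal{F}\}$. $(X,f)$ is multi-transitive if for every $n\in\mathbb{N}$ the system $(X^n,f\times f^2\times\dots\times f^n)$ is transitive. For $\mathbf{a}\in\mathbb{N}^r$, $\mathcal{F}[\mathbf{a}]$ is the collection of all $F\subset\mathbb{N}$ such that for every $(n_1,\dots,n_r)\in\mathbb{Z}_+^r$ there is $k\in\mathbb{N}$ with $ka_i+n_i\in F$ for all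 $i$; and $\mathcal{F}[\infty]=\bigcap_{i=1}^\infty\mathcal{F}[(1,2,\dots,i)]$. *)

From Stdlib Require Import Reals List.
Open Scope R_scope.

Definition is_metric {X : Type} (d : X -> X -> R) : Prop :=
  (forall x y, 0 <= d x y) /\
  (forall x y, d x y = 0 <-> x = y) /\
  (forall x y, d x y = d y x) /\
  (forall x y z, d x z <= d x y + d y z).

Definition is_open {X : Type} (d : X -> X -> R) (U : X -> Prop) : Prop :=
  forall x, U x -> exists eps, 0 < eps /\ forall y, d x y < eps -> U y.

Definition compact_metric {X : Type} (d : X -> X -> R) : Prop :=
  forall (I : Type) (U : I -> X -> Prop),
    (forall i, is_open d (U i)) ->
    (forall x, exists i, U i x) ->
    exists l : list I, forall x, exists i, In i l /\ U i x.

Definition continuous {X : Type} (d : X -> X -> R) (f : X -> X) : Prop :=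
  forall x eps, 0 < eps ->
    exists delta, 0 < delta /\ forall y, d x y < delta -> d (f x) (f y) < eps.

(** Subsets of N = {1,2,...} are predicates on nat (only elements >= 1 used);
    families of subsets are predicates on such predicates. *)
Definition natset := nat -> Prop.
Definition family := natset -> Prop.

Definition transitive_wrt {Y : Type} (op : (Y -> Prop) -> Prop) (g : Y -> Y) : Prop :=
  forall U V, op U -> op V -> (exists y, U y) -> (exists y, V y) ->
    exists n, (1 <= n)%nat /\ exists y, U y /\ V (Nat.iter n g y).

Definition Nhit {X : Type} (f : X -> X) (U V : X -> Prop) : natset :=
  fun n => (1 <= n)%nat /\ exists x, U x /\ V (Nat.iter n f x).

Definition Nvisit {X : Type} (f : X -> X) (x : X) (U : X -> Prop) : natset :=
  fun n => (1 <= n)%nat /\ U (Nat.iter n f x).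

Definition transitive {X : Type} (d : X -> X -> R) (f : X -> X) : Prop :=
  transitive_wrt (is_open d) f.

Definition F_transitive {X : Type} (d : X -> X -> R) (f : X -> X) (Fm : family) : Prop :=
  forall U V, is_open d U -> is_open d V -> (exists y, U y) -> (exists y, V y) ->
    Fm (Nhit f U V).

Definition F_transitive_point {X : Type} (d : X -> X -> R) (f : X -> X)
  (Fm : family) (x : X) : Prop :=
  forall U, is_open d U -> (exists y, U y) -> Fm (Nvisit f x U).

Definition F_point_transitive {X : Type} (d : X -> X -> R) (f : X -> X) (Fm : family) : Prop :=
  exists x, F_transitive_point d f Fm x.

Definition diffset (F : natset) : natset :=
  fun m => exists a b, F a /\ F b /\ (b < a)%nat /\ m = (a - b)%nat.

Definition nabla (Fm : family) : family := fun F => Fm (diffset F).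

(** F[a] for a = (a_0,...,a_{r-1}) given as a function on indices < r:
    for every (n_0,...,n_{r-1}) in Z_+^r there is k >= 1 with k a_i + n_i in F for all i < r. *)
Definition Fa (r : nat) (a : nat -> nat) : family :=
  fun F => forall n : nat -> nat,
    exists k, (1 <= k)%nat /\ forall i, (i < r)%nat -> F (k * a i + n i)%nat.

(** F[infinity] = intersection over i >= 1 of F[(1,2,...,i)] *)
Definition Finf : family :=
  fun F => forall i, (1 <= i)%nat -> Fa i (fun j => S j) F.

(** Product X^n: points are x : nat -> X, only coordinates 0..n-1 relevant.
    Open sets for the product (sup-metric) topology. *)
Definition is_open_prod {X : Type} (d : X -> X -> R) (n : nat) (W : (nat -> X) -> Prop) : Prop :=
  forall x, W x -> exists eps, 0 < eps /\
    forall y, (forall i, (i < n)%nat -> d (x i) (y i) < eps) -> W y.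

(** f x f^2 x ... x f^n : coordinate i (0-based) is moved by f^(i+1). *)
Definition prod_map {X : Type} (f : X -> X) : (nat -> X) -> (nat -> X) :=
  fun x i => Nat.iter (S i) f (x i).

Definition multi_transitive {X : Type} (d : X -> X -> R) (f : X -> X) : Prop :=
  forall n, (1 <= n)%nat -> transitive_wrt (is_open_prod d n) (prod_map f).

From Stdlib Require Import Reals List Lra Lia ClassicalEpsilon Classical.
Open Scope R_scope.

(* The only property of the family F[oo] used is [Finf_shift]: it is
   closed under supersets and translations.  Transitivity lets one nonempty open
   set be carried into finitely many given ones ([transitive_pull]); with Baire
   this yields a point with dense orbit ([dense_orbit]).  Then:
   - (1) => (2): apply transitivity of f x f^2 x ... x f^i to U^i and to the
     box of preimages f^(-n_j) V;
   - (2) => (1): pull the balls around the coordinates of two points of X^n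
     back to single open sets U', V' and use one F[oo]-pattern of N(U', V');
   - (2) => (3): a point x with dense orbit satisfies N(U,U) <= N(x,U) - N(x,U);
   - (3) => (2): if s is in N(U,V), then N(x, U /\ f^(-s) V) - N(x, ...) + s
     is contained in N(U,V). *)

Section MetricFacts.

Variables (X : Type) (d : X -> X -> R).
Hypothesis Hd : is_metric d.

Lemma dist_self (x : X) : d x x = 0.
Proof. destruct Hd as [_ [H _]]. now apply H. Qed.

Lemma dist_sym (x y : X) : d x y = d y x.
Proof. destruct Hd as [_ [_ [H _]]]. apply H. Qed.

Lemma dist_triangle (x y z : X) : d x z <= d x y + d y z.
Proof. destruct Hd as [_ [_ [_ H]]]. apply H. Qed.

Lemma ball_center (c : X) (r : R) : 0 < r -> d c c < r.
Proof. now rewrite dist_self. Qed.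

Lemma open_ball (c : X) (r : R) : is_open d (fun y => d c y < r).
Proof.
  intros y Hy. exists (r - d c y). split; [lra|].
  intros z Hz. pose proof (dist_triangle c y z). lra.
Qed.

Lemma closed_ball_closed (c : X) (r : R) : is_open d (fun y => ~ d c y <= r).
Proof.
  intros y Hy. apply Rnot_le_lt in Hy. exists (d c y - r). split; [lra|].
  intros z Hz. pose proof (dist_triangle c z y). rewrite (dist_sym z y) in H. lra.
Qed.

Lemma open_full : is_open d (fun _ => True).
Proof. intros x _. exists 1. split; [lra | auto]. Qed.

Lemma open_inter (U V : X -> Prop) :
  is_open d U -> is_open d V -> is_open d (fun y => U y /\ V y).
Proof.
  intros HU HV y [HUy HVy].
  destruct (HU y HUy) as [e1 [He1 H1]]. destruct (HV y HVy) as [e2 [He2 H2]].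
  exists (Rmin e1 e2). split; [now apply Rmin_pos|].
  intros z Hz. pose proof (Rmin_l e1 e2). pose proof (Rmin_r e1 e2).
  split; [apply H1 | apply H2]; lra.
Qed.

Lemma open_preimage (g : X -> X) (U : X -> Prop) :
  continuous d g -> is_open d U -> is_open d (fun y => U (g y)).
Proof.
  intros Hg HU y Hy. destruct (HU (g y) Hy) as [e [He H]].
  destruct (Hg y e He) as [delta [Hdelta H']]. exists delta. split; auto.
Qed.

Lemma iter_continuous (g : X -> X) (n : nat) : continuous d g -> continuous d (Nat.iter n g).
Proof.
  intros Hg. induction n as [|n IH]; simpl.
  - intros x e He. exists e. split; auto.
  - intros x e He. destruct (Hg (Nat.iter n g x) e He) as [e' [He' H1]].
    destruct (IH x e' He') as [delta [Hdelta H2]].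
    exists delta. split; [exact Hdelta|]. intros y Hy. now apply H1, H2.
Qed.

Lemma open_box (n : nat) (O : nat -> X -> Prop) :
  (forall j, (j < n)%nat -> is_open d (O j)) ->
  is_open_prod d n (fun y => forall j, (j < n)%nat -> O j (y j)).
Proof.
  induction n as [|n IH]; intros HO x Hx.
  - exists 1. split; [lra|]. intros; lia.
  - destruct (IH (fun j Hj => HO j ltac:(lia)) x (fun j Hj => Hx j ltac:(lia)))
      as [e1 [He1 H1]].
    destruct (HO n ltac:(lia) (x n) (Hx n ltac:(lia))) as [e2 [He2 H2]].
    exists (Rmin e1 e2). split; [now apply Rmin_pos|].
    intros y Hy j Hj. pose proof (Rmin_l e1 e2). pose proof (Rmin_r e1 e2).
    destruct (Nat.eq_dec j n) as [->|Hjn].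
    + apply H2. specialize (Hy n Hj). lra.
    + apply H1; [|lia]. intros i Hi. specialize (Hy i ltac:(lia)). lra.
Qed.

Lemma finite_net (Hc : compact_metric d) (r : R) :
  0 < r -> exists L : list X, forall y, exists c, In c L /\ d c y < r.
Proof.
  intros Hr. destruct (Hc X (fun c y => d c y < r)) as [L HL].
  - intros c. apply open_ball.
  - intros y. exists y. now apply ball_center.
  - now exists L.
Qed.

Lemma cantor_intersection (Hc : compact_metric d) (C : nat -> X -> Prop) :
  (forall m, is_open d (fun y => ~ C m y)) ->
  (forall m, exists y, C m y) ->
  (forall m y, C (S m) y -> C m y) ->
  exists x, forall m, C m x.
Proof.
  intros Hclosed Hne Hdec.
  assert (Hchain : forall M m y, (m <= M)%nat -> C M y -> C m y).
  { induction M as [|M IH]; intros m y Hm HM.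
    - now replace m with 0%nat by lia.
    - destruct (Nat.eq_dec m (S M)) as [->|Hne']; [exact HM|].
      apply IH; [lia | now apply Hdec]. }
  apply NNPP. intros Hnone.
  destruct (Hc nat (fun m y => ~ C m y) Hclosed) as [l Hl].
  - intros y. apply not_all_ex_not. intros Hall. apply Hnone. now exists y.
  - destruct (Hne (list_max l)) as [y Hy].
    destruct (Hl y) as [m [Hm Hmy]]. apply Hmy.
    apply (Hchain (list_max l)); [|exact Hy].
    exact (proj1 (Forall_forall _ l) (proj1 (list_max_le l _) (le_n _)) m Hm).
Qed.

(* The point is found by nesting closed balls. *)
Lemma baire (Hc : compact_metric d) (D : nat -> X -> Prop) :
  inhabited X ->
  (forall m O, is_open d O -> (exists y, O y) ->
     exists O', is_open d O' /\ (exists y, O' y) /\ forall y, O' y -> O y /\ D m y) ->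
  exists x, forall m, D m x.
Proof.
  intros [x0] HD.
  assert (Hrefine : forall m p r, 0 < r -> exists q e, 0 < e /\
            forall y, d q y <= e -> d p y < r /\ D m y).
  { intros m p r Hr.
    destruct (HD m _ (open_ball p r) (ex_intro _ p (ball_center p r Hr)))
      as [O' [HO' [[q Hq] Hsub]]].
    destruct (HO' q Hq) as [e [He Hball]].
    exists q, (e / 2). split; [lra|]. intros y Hy. apply Hsub, Hball. lra. }
  (* The refinement step, made total in the ball so that [choice] applies. *)
  assert (Hstep : forall s : nat * (X * R), exists s' : X * R,
            0 < snd (snd s) -> 0 < snd s' /\ forall y, d (fst s') y <= snd s' ->
              d (fst (snd s)) y < snd (snd s) /\ D (fst s) y).
  { intros [m [p r]]. simpl. destruct (Rlt_dec 0 r) as [Hr|Hr].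
    - destruct (Hrefine m p r Hr) as [q [e He]]. now exists (q, e).
    - exists (p, r). intros; lra. }
  destruct (choice _ Hstep) as [next Hnext].
  (* [balls m] = (centre, radius) of the m-th closed ball of the nested sequence. *)
  set (balls := fix balls (m : nat) : X * R :=
         match m with 0%nat => (x0, 1) | S m => next (m, balls m) end).
  assert (Hpos : forall m, 0 < snd (balls m)).
  { induction m as [|m IH]; [simpl; lra|]. exact (proj1 (Hnext (m, balls m) IH)). }
  destruct (cantor_intersection Hc (fun m y => d (fst (balls m)) y <= snd (balls m)))
    as [x Hx].
  - intros m. apply closed_ball_closed.
  - intros m. exists (fst (balls m)). rewrite dist_self. exact (Rlt_le _ _ (Hpos m)).
  - intros m y Hy. exact (Rlt_le _ _ (proj1 (proj2 (Hnext (m, balls m) (Hpos m)) y Hy))).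
  - exists x. intros m. exact (proj2 (proj2 (Hnext (m, balls m) (Hpos m)) x (Hx (S m)))).
Qed.

End MetricFacts.

(* [F[oo]] is closed under supersets and under translation by a fixed [s]:
   this is all we need about the family [F[oo]] itself. *)
Lemma Finf_shift (A B : natset) (s : nat) :
  Finf A -> (forall a, A a -> B (a + s)%nat) -> Finf B.
Proof.
  intros HA HAB i Hi n.
  destruct (HA i Hi (fun j => n j + s * j)%nat) as [k [Hk Hkn]].
  exists (k + s)%nat. split; [lia|]. intros j Hj.
  replace ((k + s) * S j + n j)%nat with (k * S j + (n j + s * j) + s)%nat by nia.
  now apply HAB, Hkn.
Qed.

Lemma finite_bound (b : nat -> nat) (n : nat) : exists c, forall j, (j < n)%nat -> (b j <= c)%nat.
Proof.
  induction n as [|n [c Hc]]; [exists 0%nat; intros; lia|].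
  exists (Nat.max c (b n)). intros j Hj.
  destruct (Nat.eq_dec j n) as [->|Hjn]; [lia|]. specialize (Hc j ltac:(lia)). lia.
Qed.

Section Dynamics.

Variables (X : Type) (d : X -> X -> R) (f : X -> X).
Hypothesis Hd : is_metric d.
Hypothesis Hf : continuous d f.

Lemma iter_prod_map (k : nat) (y : nat -> X) (j : nat) :
  Nat.iter k (prod_map f) y j = Nat.iter (k * S j) f (y j).
Proof.
  induction k as [|k IH]; [reflexivity|].
  change (Nat.iter (S j) f (Nat.iter k (prod_map f) y j) = Nat.iter (S k * S j) f (y j)).
  now rewrite IH, <- Nat.iter_add.
Qed.

Lemma open_iter_preimage (n : nat) (U : X -> Prop) :
  is_open d U -> is_open d (fun y => U (Nat.iter n f y)).
Proof. intros HU. apply open_preimage; [apply iter_continuous|]; assumption. Qed.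

Lemma transitive_pull (Ht : transitive d f) (O : X -> Prop) (T : nat -> X -> Prop) (n : nat) :
  is_open d O -> (exists y, O y) ->
  (forall j, (j < n)%nat -> is_open d (T j) /\ exists y, T j y) ->
  exists O' (a : nat -> nat), is_open d O' /\ (exists y, O' y) /\
    (forall j, (j < n)%nat -> 1 <= a j)%nat /\
    forall z, O' z -> O z /\ forall j, (j < n)%nat -> T j (Nat.iter (a j) f z).
Proof.
  intros HO HOne. induction n as [|n IH]; intros HT.
  - exists O, (fun _ => 0%nat). split; [exact HO|]. split; [exact HOne|].
    split; [intros; lia|]. intros z Hz. split; [exact Hz | intros; lia].
  - destruct IH as [O' [a [HO' [HO'ne [Hapos Ha]]]]]; [intros j Hj; apply HT; lia|].
    destruct (HT n ltac:(lia)) as [HTn HTne].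
    destruct (Ht O' (T n) HO' HTn HO'ne HTne) as [m [Hm [y [Hy1 Hy2]]]].
    exists (fun z => O' z /\ T n (Nat.iter m f z)), (fun j => if Nat.eqb j n then m else a j).
    split; [apply open_inter; [|apply open_iter_preimage]; assumption|].
    split; [now exists y|].
    split.
    { intros j Hj. destruct (Nat.eqb_spec j n) as [_|Hjn]; [exact Hm|]. apply Hapos. lia. }
    intros z [Hz1 Hz2]. destruct (Ha z Hz1) as [HzO Hzj]. split; [exact HzO|].
    intros j Hj. destruct (Nat.eqb_spec j n) as [->|Hjn]; [exact Hz2|].
    apply Hzj. lia.
Qed.

(* A transitive map on a compact metric space has a point whose forward orbit
   meets every nonempty open set: by [baire], applied to the sets of points
   whose orbit comes [1/(m+1)]-close to every point of a [1/(m+1)]-net. *)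
Lemma dense_orbit (Hc : compact_metric d) (Ht : transitive d f) : inhabited X ->
  exists x, forall U, is_open d U -> (exists y, U y) ->
    exists t, (1 <= t)%nat /\ U (Nat.iter t f x).
Proof.
  intros Hne.
  assert (Hrad : forall m : nat, 0 < / INR (S m))
    by (intros m; apply Rinv_0_lt_compat, lt_0_INR; lia).
  destruct (choice _ (fun m => finite_net X d Hd Hc _ (Hrad m))) as [net Hnet].
  destruct (baire X d Hd Hc (fun m y => forall c, In c (net m) ->
              exists t, (1 <= t)%nat /\ d c (Nat.iter t f y) < / INR (S m)) Hne)
    as [x Hx].
  - intros m O HO [y Hy].
    destruct (transitive_pull Ht O (fun j z => d (nth j (net m) y) z < / INR (S m))
                (length (net m)) HO (ex_intro _ y Hy)) as [O' [a [HO' [HO'ne [Hapos Ha]]]]].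
    { intros j _. split; [apply open_ball; exact Hd|].
      exists (nth j (net m) y). now apply ball_center. }
    exists O'. split; [exact HO'|]. split; [exact HO'ne|].
    intros z Hz. destruct (Ha z Hz) as [HzO Hzj]. split; [exact HzO|].
    intros c Hcin. destruct (In_nth _ _ y Hcin) as [j [Hj <-]].
    exists (a j). split; [apply Hapos | apply Hzj]; exact Hj.
  - exists x. intros U HU [u Hu]. destruct (HU u Hu) as [e [He HUe]].
    destruct (archimed_cor1 (e / 2) ltac:(lra)) as [N [HN HN0]].
    replace N with (S (N - 1)) in HN by lia.
    destruct (Hnet (N - 1)%nat u) as [c [Hcin Hcu]].
    destruct (Hx (N - 1)%nat c Hcin) as [t [Ht1 Htc]].
    exists t. split; [exact Ht1|]. apply HUe.
    pose proof (dist_triangle X d Hd u c (Nat.iter t f x)).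
    rewrite (dist_sym X d Hd u c) in H. lra.
Qed.

Lemma transitive_preimage_nonempty (Ht : transitive d f) (m : nat) (V : X -> Prop) :
  is_open d V -> (exists y, V y) -> exists z, V (Nat.iter m f z).
Proof.
  revert V. induction m as [|m IH]; intros V HV [y Hy]; [now exists y|].
  destruct (Ht _ V (open_full X d) HV (ex_intro _ y I) (ex_intro _ y Hy))
    as [t [Ht1 [y' [_ Hy']]]].
  replace t with (S (t - 1)) in Hy' by lia.
  exact (IH (fun z => V (f z)) (open_preimage X d f V Hf HV) (ex_intro _ _ Hy')).
Qed.

Lemma multi_transitive_transitive : multi_transitive d f -> transitive d f.
Proof.
  intros HM U V HU HV [u Hu] [v Hv].
  destruct (HM 1%nat (le_n 1) (fun y => forall j, (j < 1)%nat -> U (y j))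
              (fun y => forall j, (j < 1)%nat -> V (y j))) as [k [Hk [y [Hy1 Hy2]]]].
  - exact (open_box X d 1 (fun _ => U) (fun _ _ => HU)).
  - exact (open_box X d 1 (fun _ => V) (fun _ _ => HV)).
  - now exists (fun _ => u).
  - now exists (fun _ => v).
  - exists k. split; [exact Hk|]. exists (y 0%nat). split; [apply Hy1; lia|].
  specialize (Hy2 0%nat ltac:(lia)). rewrite iter_prod_map, Nat.mul_1_r in Hy2.
  exact Hy2.
Qed.

Lemma Finf_transitive_transitive : F_transitive d f Finf -> transitive d f.
Proof.
  intros HF U V HU HV HUne HVne.
  destruct (HF U V HU HV HUne HVne 1%nat (le_n 1) (fun _ => 0%nat)) as [k [_ Hk]].
  destruct (Hk 0%nat ltac:(lia)) as [Hpos Hhit]. now exists (k * 1 + 0)%nat.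
Qed.

(* (1) => (2): given [U, V], shifts [n j] and [i], apply transitivity of
   [f x ... x f^i] to the boxes [U^i] and [prod_j f^(-n j) V]. *)
Lemma multi_to_Finf : multi_transitive d f -> F_transitive d f Finf.
Proof.
  intros HM. pose proof (multi_transitive_transitive HM) as Ht.
  intros U V HU HV [u Hu] HVne i Hi n.
  destruct (choice _ (fun j => transitive_preimage_nonempty Ht (n j) V HV HVne)) as [w Hw].
  destruct (HM i Hi (fun y => forall j, (j < i)%nat -> U (y j))
              (fun y => forall j, (j < i)%nat -> V (Nat.iter (n j) f (y j))))
    as [k [Hk [y [Hy1 Hy2]]]].
  - exact (open_box X d i (fun _ => U) (fun _ _ => HU)).
  - exact (open_box X d i (fun j z => V (Nat.iter (n j) f z))
             (fun j _ => open_iter_preimage (n j) V HV)).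
  - now exists (fun _ => u).
  - now exists w.
  - exists k. split; [exact Hk|]. intros j Hj. split; [nia|].
    exists (y j). split; [now apply Hy1|].
    specialize (Hy2 j Hj). rewrite iter_prod_map, <- Nat.iter_add, Nat.add_comm in Hy2.
    exact Hy2.
Qed.

(* (2) => (1): boxes of balls [B(x_j, e1)] and [B(y_j, e2)] lie in [W] and [W'].
   Pull each family back to single open sets [U'] (via [f^(a j)]) and [V']
   (via [f^(b j)]); one [F[oo]]-pattern of returns from [U'] to [V'] with
   offsets [a j + c (j+1) - b j] then gives a common return time [k + c]. *)
Lemma Finf_to_multi : F_transitive d f Finf -> multi_transitive d f.
Proof.
  intros HF. pose proof (Finf_transitive_transitive HF) as Ht.
  intros n Hn W W' HW HW' [x Hx] [y Hy].
  destruct (HW x Hx) as [e1 [He1 HB1]]. destruct (HW' y Hy) as [e2 [He2 HB2]].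
  destruct (transitive_pull Ht (fun _ => True) (fun j z => d (x j) z < e1) n
              (open_full X d) (ex_intro _ (x 0%nat) I)) as [U' [a [HU' [HU'ne [_ Ha]]]]].
  { intros j _. split; [now apply open_ball | exists (x j); now apply ball_center]. }
  destruct (transitive_pull Ht (fun _ => True) (fun j z => d (y j) z < e2) n
              (open_full X d) (ex_intro _ (x 0%nat) I)) as [V' [b [HV' [HV'ne [_ Hb]]]]].
  { intros j _. split; [now apply open_ball | exists (y j); now apply ball_center]. }
  destruct (finite_bound b n) as [c Hc].
  destruct (HF U' V' HU' HV' HU'ne HV'ne n Hn (fun j => a j + c * S j - b j)%nat)
    as [k [Hk Hhit]].
  assert (Hz : forall j, exists z, (j < n)%nat ->
             U' z /\ V' (Nat.iter (k * S j + (a j + c * S j - b j)) f z)).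
  { intros j. destruct (Nat.lt_ge_cases j n) as [Hj|Hj].
    - destruct (Hhit j Hj) as [_ [z Hz]]. now exists z.
    - exists (x 0%nat). intros; lia. }
  destruct (choice _ Hz) as [z Hzj].
  exists (k + c)%nat. split; [lia|].
  exists (fun j => Nat.iter (a j) f (z j)). split.
  - apply HB1. intros j Hj. exact (proj2 (Ha (z j) (proj1 (Hzj j Hj))) j Hj).
  - apply HB2. intros j Hj. rewrite iter_prod_map, <- Nat.iter_add.
    replace ((k + c) * S j + a j)%nat
      with (b j + (k * S j + (a j + c * S j - b j)))%nat by (specialize (Hc j Hj); nia).
    rewrite Nat.iter_add. exact (proj2 (Hb _ (proj2 (Hzj j Hj))) j Hj).
Qed.

(* A [nabla F[oo]]-transitive point visits every nonempty open set at
   arbitrarily late times (the differences of its visit times are unbounded). *)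
Lemma nabla_point_visits_late (x : X) :
  F_transitive_point d f (nabla Finf) x ->
  forall U, is_open d U -> (exists y, U y) ->
    forall N, exists a, (N < a)%nat /\ U (Nat.iter a f x).
Proof.
  intros Hx U HU HUne N.
  destruct (Hx U HU HUne 1%nat (le_n 1) (fun _ => N)) as [k [Hk Hdiff]].
  destruct (Hdiff 0%nat ltac:(lia)) as [a [b [[_ HaU] [_ [_ Ediff]]]]].
  exists a. split; [lia | exact HaU].
Qed.

(* A [nabla F[oo]]-transitive point forces transitivity: a late visit to [V]
   after a visit to [U] gives a return time from [U] to [V]. *)
Lemma nabla_point_transitive (x : X) :
  F_transitive_point d f (nabla Finf) x -> transitive d f.
Proof.
  intros Hx U V HU HV HUne HVne.
  destruct (nabla_point_visits_late x Hx U HU HUne 0%nat) as [b [Hb HbU]].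
  destruct (nabla_point_visits_late x Hx V HV HVne b) as [a [Hab HaV]].
  exists (a - b)%nat. split; [lia|]. exists (Nat.iter b f x). split; [exact HbU|].
  rewrite <- Nat.iter_add. now replace (a - b + b)%nat with a by lia.
Qed.

(* (3) => (2): with a return time [s] from [U] to [V], the differences of visit
   times of the point to [U /\ f^(-s) V], shifted by [s], are return times from
   [U] to [V]. *)
Lemma point_to_Finf : F_point_transitive d f (nabla Finf) -> F_transitive d f Finf.
Proof.
  intros [x Hx] U V HU HV HUne HVne.
  destruct (nabla_point_transitive x Hx U V HU HV HUne HVne) as [s [_ [y [Hy1 Hy2]]]].
  apply (Finf_shift (diffset (Nvisit f x (fun z => U z /\ V (Nat.iter s f z)))) _ s).
  - apply Hx; [apply open_inter; [|apply open_iter_preimage]; assumption | now exists y].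
  - intros m [a [b [[_ [_ HaV]] [[_ [HbU _]] [Hab ->]]]]].
    split; [lia|]. exists (Nat.iter b f x). split; [exact HbU|].
    rewrite <- Nat.iter_add. replace (a - b + s + b)%nat with (s + a)%nat by lia.
    now rewrite Nat.iter_add.
Qed.

(* (2) => (3): a point with dense orbit works, since every return time [m]
   from [U] to [U] is a difference [(m + t) - t] of visit times to [U]. *)
Lemma Finf_to_point (Hc : compact_metric d) :
  inhabited X -> F_transitive d f Finf -> F_point_transitive d f (nabla Finf).
Proof.
  intros Hne HF.
  destruct (dense_orbit Hc (Finf_transitive_transitive HF) Hne) as [x Hx].
  exists x. intros U HU HUne.
  apply (Finf_shift (Nhit f U U) _ 0 (HF U U HU HU HUne HUne)).
  intros m [Hm [y [Hy1 Hy2]]]. rewrite Nat.add_0_r.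
  destruct (Hx (fun z => U z /\ U (Nat.iter m f z))) as [t [Ht [HtU HtmU]]].
  - apply open_inter; [|apply open_iter_preimage]; assumption.
  - now exists y.
  - exists (m + t)%nat, t. split; [split; [lia | now rewrite Nat.iter_add]|].
    split; [split; assumption|]. split; lia.
Qed.

End Dynamics.

Theorem theorem4p9 (X : Type) (d : X -> X -> R) (f : X -> X)
  (Hd : is_metric d) (Hc : compact_metric d) (Hf : continuous d f) (Hne : inhabited X) :
  (multi_transitive d f <-> F_transitive d f Finf) /\
  (F_transitive d f Finf <-> F_point_transitive d f (nabla Finf)).
Proof.
  split; split.
  - exact (multi_to_Finf X d f Hf).
  - exact (Finf_to_multi X d f Hd Hf).
  - exact (Finf_to_point X d f Hd Hf Hc Hne).
  - exact (point_to_Finf X d f Hf).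
Qed.
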